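(* Let \(m\) be a positive integer that is not a perfect square, let \(a,b,c\) be positive integers with \(\gcd(a,b^2-c^2m)=1\), and let \(A,B\in\mathbb Z\). If \(A\geq (a-1)(b-1+cm)\) and \(B\geq (a-1)(b-1+c)\), then there exist \(x,y,z,w\in\mathbb N\) with \(a(x+y\sqrt m)+(b+c\sqrt m)(z+w\sqrt m)=A+B\sqrt m\).
   Context: \(\mathbb N\) denotes the set of non-negative integers. *)

From Stdlib Require Import Reals ZArith.
Definition is_perfect_square (m : Z) : Prop := exists k : Z, m = (k * k)%Z.

(** Since [gcd(a, b^2 - c^2 m) = 1], the element [b + c√m] is invertible
    modulo [a] in [Z[√m]], so every [A + B√m] is congruent modulo [a] to a
    multiple [(b + c√m)(z + w√m)] with [0 <= z, w < a].  The quotient by [a]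
    is then [x + y√m] with integers [x, y], and the lower bounds on [A] and
    [B] leave room for the at most [(a-1)(b+cm)] resp. [(a-1)(b+c)] used by
    the second summand, forcing [x, y >= 0]. *)

From Stdlib Require Import Reals ZArith Lia.

Open Scope Z_scope.

Lemma combination_of_gcd_norm (m a b c A B : Z) :
  Z.gcd a (b * b - c * c * m) = 1 ->
  exists x y z w : Z,
    A = a * x + b * z + c * m * w /\ B = a * y + c * z + b * w.
Proof.
  intros Hg.
  destruct (Z.gcd_bezout _ _ _ Hg) as [u [v Huv]].
  (* [v (b - c√m)] inverts [b + c√m] modulo [a]. *)
  exists (A * u), (B * u), (v * (b * A - c * m * B)), (v * (b * B - c * A)).
  split.
  - transitivity (A * (u * a + v * (b * b - c * c * m))); [rewrite Huv | ]; ring.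
  - transitivity (B * (u * a + v * (b * b - c * c * m))); [rewrite Huv | ]; ring.
Qed.

Lemma combination_reduce_mod (m a b c A B x y z w : Z) :
  0 < a ->
  A = a * x + b * z + c * m * w -> B = a * y + c * z + b * w ->
  exists x' y' : Z,
    A = a * x' + b * (z mod a) + c * m * (w mod a) /\
    B = a * y' + c * (z mod a) + b * (w mod a).
Proof.
  intros Ha EA EB.
  pose proof (Z.div_mod z a ltac:(lia)) as Ez.
  pose proof (Z.div_mod w a ltac:(lia)) as Ew.
  exists (x + b * (z / a) + c * m * (w / a)), (y + c * (z / a) + b * (w / a)).
  split; [rewrite EA | rewrite EB]; rewrite Ez at 1; rewrite Ew at 1; ring.
Qed.

Lemma nonneg_of_mul_gt_opp (a x : Z) : 0 < a -> - a < a * x -> 0 <= x.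
Proof. intros Ha H. nia. Qed.

Lemma quadratic_combination_IZR (m a b c x y z w : Z) (s : R) :
  (s * s = IZR m)%R ->
  (IZR a * (IZR x + IZR y * s) + (IZR b + IZR c * s) * (IZR z + IZR w * s)
   = IZR (a * x + b * z + c * m * w) + IZR (a * y + c * z + b * w) * s)%R.
Proof.
  intros Hs.
  rewrite !plus_IZR, !mult_IZR, <- Hs.
  ring.
Qed.

Theorem theorem1 (m a b c A B : Z) :
  (0 < m)%Z -> ~ is_perfect_square m ->
  (0 < a)%Z -> (0 < b)%Z -> (0 < c)%Z ->
  Z.gcd a (b * b - c * c * m) = 1%Z ->
  (A >= (a - 1) * (b - 1 + c * m))%Z ->
  (B >= (a - 1) * (b - 1 + c))%Z ->
  exists x y z w : nat,
    (IZR a * (INR x + INR y * sqrt (IZR m))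
     + (IZR b + IZR c * sqrt (IZR m)) * (INR z + INR w * sqrt (IZR m))
     = IZR A + IZR B * sqrt (IZR m))%R.
Proof.
  intros Hm _ Ha Hb Hc Hg HA HB.
  destruct (combination_of_gcd_norm m a b c A B Hg) as (x0 & y0 & z0 & w0 & EA0 & EB0).
  destruct (combination_reduce_mod m a b c A B x0 y0 z0 w0 Ha EA0 EB0)
    as (x & y & EA & EB).
  set (z := z0 mod a) in *. set (w := w0 mod a) in *.
  assert (Hz : 0 <= z < a) by (apply Z.mod_pos_bound; lia).
  assert (Hw : 0 <= w < a) by (apply Z.mod_pos_bound; lia).
  assert (Hx : 0 <= x) by (apply (nonneg_of_mul_gt_opp a); nia).
  assert (Hy : 0 <= y) by (apply (nonneg_of_mul_gt_opp a); nia).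
  exists (Z.to_nat x), (Z.to_nat y), (Z.to_nat z), (Z.to_nat w).
  rewrite !INR_IZR_INZ, !Z2Nat.id by lia.
  rewrite EA, EB.
  apply quadratic_combination_IZR, sqrt_sqrt, IZR_le; lia.
Qed.
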